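(* Let $U,V\in\mathbb{R}_{\max}^{m\times n}$, $b,d\in\mathbb{R}_{\max}^m$, $p\in\mathbb{R}_{\max}^n$, $q\in(\mathbb{R}\cup\{+\infty\})^n$, with $A$, $B(\lambda)$, $\Phi$, strategies and the game graph as described in the context. Then $\lambda^*\in\mathbb{R}$ is optimal (i.e. $\Phi(\lambda^* )\ge 0$ and $\Phi(\lambda)<0$ for all $\lambda<\lambda^*$) if and only if $\Phi(\lambda^* )\geq 0$ and there exist a positional strategy $\tau$ of Min and a node $j$ of Min such that, in the game graph defined by $A_\tau$ and $B(\lambda^* )$, every cycle accessible from $j$ has non-positive weight, and every cycle of zero weight accessible from $j$ contains a node of Max that does not belong to the group $[m]$.
   Context: Max-plus notation: $\mathbb{R}_{\max}=\mathbb{R}\cup\{-\infty\}$, $a\oplus b=\max(a,b)$, $a\otimes b=a+b$, extended to matrices as usual ($(A\otimes B)_{ij}=\max_k(a_{ik}+b_{kj})$). $I$ is the max-plus identity (0 on the diagonal, $-\infty$ elsewhere). The conjugate $a^-$ is $-a$ for real $a$, $+\infty$ for $a=-\infty$, $-\infty$ for $a=+\infty$; $q^-=(q_i^-)$ as a row vector. These data define Problem (P): minimize $x^-\otimes p\oplus q^-\otimes x$ over $x\in\mathbb{R}^n$ subject to $U\otimes x\oplus b\le V\otimes x\oplus d$. Set $$A=\begin{pmatrix} U & b\\ -\infty & p\\ q^- & -\infty\end{pmatrix},\qquad B(\lambda)=\begin{pmatrix} V & d\\ \lambda\otimes I & -\infty\\ -\infty & \lambda\end{pmatrix}$$ ($(m+n+1)\times(n+1)$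 matrices; the middle block row of $A$ is $(-\infty_{n\times n},\,p)$, its last row is $(q^-,-\infty)$; $\lambda\otimes I$ has $\lambda$ on the diagonal and $-\infty$ elsewhere; the last row of $B(\lambda)$ is $(-\infty,\dots,-\infty,\lambda)$). Game graph defined by matrices $A'$ and $B'$ (both $(m+n+1)\times(n+1)$): nodes of Max are the rows $1,\dots,m+n+1$, and the first $m$ rows form the group $[m]$ (corresponding to the constraint $U\otimes x\oplus b\le V\otimes x\oplus d$); nodes of Min are the columns $1,\dots,n+1$. There is an arc from Max node $i$ to Min node $l$ of weight $b'_{il}$ whenever $b'_{il}\ne-\infty$, and an arc from Min node $j$ to Max node $i$ of weight $-a'_{ij}$ whenever $a'_{ij}\neq-\infty$. The weight of a cycle is the sum of its arc weights. A positional strategy of Min is a map $\tau:\{1,\dots,n+1\}\to\{1,\dots,m+n+1\}$ with $a_{\tau(j)j}\ne-\infty$; $A_\tau$ keeps the entries $a_{\tau(j)j}$ and replaces all other entries by $-\infty$. For $M\times N$ matrices $A',B'$, $A'^\sharp B'$ denotes the map $f_j(x)=\min_{k:a'_{kj}\ne-\infty}(-a'_{kj}+\max_{l:b'_{kl}\ne-\infty}(b'_{kl}+x_l))$ on $\mathbb{R}^N$, with cycle-time vector $\chi(A'^\sharp B')=\lim_k f^k(0)/k$; $\Phi(\lambda)=\min_i\chi_i(A^\sharp B(\lambda))$. (Standing assumption: every column of $A$ and every row of $B(\lambda)$ has a finite entry.) The condition $\Phi(\lambda)\ge0$ expresses that Problem (P) has a feasible $x\in\mathbb{R}^n$ with objective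 value at most $\lambda$. *)

(* Max-plus scalars are encoded in the
   extended reals \bar R: -oo is the max-plus zero -infinity, +oo is +infinity. *)
From HB Require Import structures.
From mathcomp Require Import all_boot all_order all_algebra.
From mathcomp Require Import all_classical all_reals all_analysis.
Set Implicit Arguments. Unset Strict Implicit. Unset Printing Implicit Defensive.
Import Order.TTheory GRing.Theory Num.Theory numFieldNormedType.Exports.
Local Open Scope ring_scope.
Local Open Scope ereal_scope.

Section MaxPlus.
Variable R : realType.

(* Under the standing
   assumption the inner value is finite, and [fine] returns it as a real. *)
Definition sharp (M N : nat) (A' B' : 'M[\bar R]_(M, N)) (x : 'I_N -> R) :
    'I_N -> R := fun j =>
  fine (\big[Order.min/+oo]_(k | A' k j != -oo)
          (- A' k j + \big[Order.max/-oo]_(l | B' k l != -oo) (B' k l + (x l)%:E))).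

Definition chi (M N : nat) (A' B' : 'M[\bar R]_(M, N)) (i : 'I_N) : R :=
  limn (fun k : nat => (iter k (sharp A' B') (fun _ => 0%R) i / k%:R)%R).

Variables (m n : nat) (U V : 'M[\bar R]_(m, n)) (b d : 'cV[\bar R]_m)
  (p : 'cV[\bar R]_n) (q : 'rV[\bar R]_n).

Definition Amat : 'M[\bar R]_(m + n + 1, n + 1) :=
  col_mx (col_mx (row_mx U b) (row_mx (const_mx -oo) p))
         (row_mx (map_mx (fun x => - x) q) (const_mx -oo)).

Definition lamI (lam : R) : 'M[\bar R]_n :=
  \matrix_(i, j) if i == j then lam%:E else -oo.

Definition Bmat (lam : R) : 'M[\bar R]_(m + n + 1, n + 1) :=
  col_mx (col_mx (row_mx V d) (row_mx (lamI lam) (const_mx -oo)))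
         (row_mx (const_mx -oo) (const_mx lam%:E)).

(* Phi(lambda) = min_i chi_i(A^# B(lambda))  (an extended real; the index set is
   nonempty so the +oo default is never the value) *)
Definition Phi (lam : R) : \bar R :=
  \big[Order.min/+oo]_(i < n + 1) (chi Amat (Bmat lam) i)%:E.

Definition optimal (lam : R) : Prop :=
  0 <= Phi lam /\ forall l : R, (l < lam)%R -> Phi l < 0.

End MaxPlus.

(* ---- game graph defined by A', B' (M Max nodes = rows, N Min nodes = columns) *)
Section Game.
Variable R : realType.
Variables (M N : nat) (A' B' : 'M[\bar R]_(M, N)).

Definition is_strategy (tau : 'I_N -> 'I_M) : Prop :=
  forall j, A' (tau j) j != -oo.

Definition restr (tau : 'I_N -> 'I_M) : 'M[\bar R]_(M, N) :=
  \matrix_(i, j) if i == tau j then A' i j else -oo.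

(* Min node j leads (in two steps, via some Max node i) to Min node l *)
Definition minstep : rel 'I_N :=
  fun j l => [exists i, (A' i j != -oo) && (B' i l != -oo)].

(* a closed walk  cl 0 -> ci 0 -> cl 1 -> ci 1 -> ... -> ci K -> cl 0
   alternating between Min nodes cl k and Max nodes ci k *)
Definition is_cycle (K : nat) (cl : 'I_K.+1 -> 'I_N) (ci : 'I_K.+1 -> 'I_M) : Prop :=
  forall k, A' (ci k) (cl k) != -oo /\ B' (ci k) (cl (ordS k)) != -oo.

Definition cycle_weight (K : nat) (cl : 'I_K.+1 -> 'I_N) (ci : 'I_K.+1 -> 'I_M) : \bar R :=
  \sum_(k < K.+1) (- A' (ci k) (cl k) + B' (ci k) (cl (ordS k))).

Definition cycle_accessible (j : 'I_N) (K : nat) (cl : 'I_K.+1 -> 'I_N) : Prop :=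
  exists k, connect minstep j (cl k).

(* the condition of Proposition 7 at Min node j, for the group [m] of the first
   m Max nodes *)
Definition good_node (m : nat) (j : 'I_N) : Prop :=
  forall K (cl : 'I_K.+1 -> 'I_N) (ci : 'I_K.+1 -> 'I_M),
    is_cycle cl ci -> cycle_accessible j cl ->
    cycle_weight cl ci <= 0 /\
    (cycle_weight cl ci = 0 -> exists k, (m <= val (ci k))%N).

End Game.

From HB Require Import structures.
From mathcomp Require Import all_boot all_order all_algebra.
From mathcomp Require Import all_classical all_reals all_analysis.
From mathcomp Require Import lra.
Set Implicit Arguments. Unset Strict Implicit. Unset Printing Implicit Defensive.
Import Order.TTheory GRing.Theory Num.Theory numFieldNormedType.Exports.
Local Open Scope ring_scope.

(* The map A^# B(lambda) is the Shapley operator of the mean-payoff game played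
   on the graph of A and B(lambda), and chi_j(A^# B(lambda)) is the value of this
   game from the Min node j.  Positional determinacy, proved by induction on the
   number of arcs of Min (split the choices at one node, glue the potentials of
   Max), shows that chi_j < 0 exactly when Min has a positional strategy all of
   whose cycles accessible from j are negative: such cycles can be cut out of any
   play, so its weight decreases linearly, while a potential of Max bounds the
   iterates from below.
   Moving lambda away from lambda* shifts the weight of a cycle by
   lambda - lambda* per visit to a Max node outside [m].  So the cycles of a
   strategy satisfy the condition of the proposition at lambda* iff they all turn
   negative for every lambda < lambda*; and if no strategy satisfies it, every
   pair (tau, j) keeps a non-negative cycle on some interval below lambda*, which
   finitely many pairs turn into a common interval, contradicting optimality. *)

Section Walks.
Variable T : finType.
Implicit Types (e : rel T) (w : nat -> T).

Definition walk e w k := forall i, (i < k)%N -> e (w i) (w i.+1).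

Definition wcat w P w' : nat -> T :=
  fun i => if (i <= P)%N then w i else w' (i - P)%N.

Lemma walk_connect e w k : walk e w k -> connect e (w 0%N) (w k).
Proof.
elim: k => [|k IH] hw; first exact: connect0.
apply: connect_trans (IH _) (connect1 _) => [i ik|]; apply: hw => //.
exact: ltnW.
Qed.

Lemma connect_walk e x y : connect e x y ->
  exists w k, [/\ w 0%N = x, w k = y & walk e w k].
Proof.
move/connectP=> [p hp ->] {y}.
elim: p x hp => [|z p IH] x /=; first by exists (fun _ => x), 0%N.
move=> /andP [exz hp]; have [w [k [w0 wk hw]]] := IH z hp.
exists (fun i => if i is i'.+1 then w i' else x), k.+1; split => //.
by case=> [|i] /= ik; [rewrite w0 | apply: hw].
Qed.

Lemma walkW e w k k' : (k' <= k)%N -> walk e w k -> walk e w k'.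
Proof. by move=> k'k hw i ik'; apply: hw; apply: leq_trans k'k. Qed.

Lemma walk_drop e w s k : walk e w (s + k) -> walk e (fun i => w (s + i)%N) k.
Proof. by move=> hw i ik; rewrite addnS; apply: hw; rewrite ltn_add2l. Qed.

Lemma wcat_head w P w' i : (i <= P)%N -> wcat w P w' i = w i.
Proof. by rewrite /wcat => ->. Qed.

Lemma wcat_tail w P w' i : w P = w' 0%N -> wcat w P w' (P + i) = w' i.
Proof.
rewrite /wcat addKn; case: i => [|i] hP; first by rewrite addn0 leqnn.
by rewrite addnS ltnNge leq_addr.
Qed.

Lemma eq_walk e w w' k : (forall i, (i <= k)%N -> w i = w' i) ->
  walk e w k -> walk e w' k.
Proof. by move=> eqw hw i ik; rewrite -!eqw ?(ltnW ik) //; apply: hw. Qed.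

Lemma closed_walk_connect e w L k : walk e w L -> w L = w 0%N -> (k <= L)%N ->
  connect e (w k) (w 0%N).
Proof.
move=> hw wL kL; rewrite -wL -(subnKC kL) -{1}(addn0 k).
by apply: (walk_connect (w := fun i => w (k + i)%N)); apply: walk_drop; rewrite subnKC.
Qed.

Lemma walk_wcat e w P w' L : w P = w' 0%N ->
  walk e w P -> walk e w' L -> walk e (wcat w P w') (P + L).
Proof.
move=> hP hw hw' i iPL; case: (ltnP i P) => iP.
  by rewrite !wcat_head ?(ltnW iP) //; apply: hw.
rewrite -(subnKC iP) -addnS !wcat_tail //; apply: hw'.
by rewrite -(ltn_add2l P) subnKC.
Qed.

Section Weight.
Variables (R : realType) (c : T -> T -> R).

Definition wgt w k := \sum_(0 <= i < k) c (w i) (w i.+1).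

Lemma wgt_split w s k :
  wgt w (s + k) = wgt w s + wgt (fun i => w (s + i)%N) k.
Proof.
rewrite /wgt (big_cat_nat (leq0n s) (leq_addr k s)) /=; congr (_ + _).
by rewrite -{1}(add0n s) big_addn addKn; apply: eq_bigr => i _; rewrite addnS addnC.
Qed.

Lemma eq_wgt w w' k : (forall i, (i <= k)%N -> w i = w' i) ->
  wgt w k = wgt w' k.
Proof. by move=> eqw; apply: eq_big_nat => i /andP [_ ik]; rewrite !eqw // ltnW. Qed.

Lemma wgt_wcat w P w' L : w P = w' 0%N ->
  wgt (wcat w P w') (P + L) = wgt w P + wgt w' L.
Proof.
move=> hP; rewrite wgt_split; congr (_ + _).
  by apply: eq_big_nat => i /andP [_ iP]; rewrite !wcat_head // ltnW.
by apply: eq_bigr => i _; rewrite !wcat_tail.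
Qed.

Definition reachable_cycles_neg e j := forall w L, (0 < L)%N -> w L = w 0%N ->
  walk e w L -> connect e j (w 0%N) -> wgt w L < 0.

Lemma lasso_potential e j w L : (0 < L)%N -> w L = w 0%N -> walk e w L ->
    connect e j (w 0%N) -> 0 <= wgt w L ->
  exists (S : pred T) (pi : T -> R),
    S j /\ forall x, S x -> exists y, [/\ e x y, S y & pi x <= c x y + pi y].
Proof.
move=> L0 wL hw /connect_walk [p [P [p0 pP hp]]] hpos.
pose W := wcat p P w; pose T' := (P + L)%N.
have hW : walk e W T' by apply: walk_wcat.
have WP : W P = w 0%N by rewrite /W wcat_head.
have WT' : W T' = W P by rewrite WP /W /T' wcat_tail.
have PT' : (P < T')%N by rewrite -{1}(addn0 P) ltn_add2l.
pose rho s := \sum_(s <= r < T') c (W r) (W r.+1).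
have rhoS s : (s < T')%N -> rho s = c (W s) (W s.+1) + rho s.+1.
  by move=> sT; rewrite /rho big_ltn.
(* Every position s of the lasso has a position [s'] strictly inside it,
   carrying the same node and at least the same suffix weight. *)
pose s' s := if (s < T')%N then s else P.
have s'T s : (s' s < T')%N by rewrite /s'; case: ifP.
have Ws' s : (s <= T')%N -> W (s' s) = W s.
  rewrite /s' leq_eqVlt => /orP [/eqP ->|->] //; by rewrite ltnn.
have rhoP : rho P = wgt w L.
  rewrite /rho /T' -{1}(add0n P) big_addn addKn.
  by apply: eq_bigr => i _; rewrite addnC -addnS /W !wcat_tail.
have rho_s' s : (s <= T')%N -> rho s <= rho (s' s).
  rewrite /s' leq_eqVlt => /orP [/eqP ->|->] //.
  by rewrite ltnn rhoP /rho big_geq.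
pose low := \big[Order.min/0]_(s < T'.+1) rho s.
pose pi x := \big[Order.max/low]_(s < T'.+1 | W s == x) rho s.
have rho_pi s : (s < T'.+1)%N -> rho s <= pi (W s).
  by move=> sT; apply: (bigmax_sup (Ordinal sT)).
exists (fun x => [exists s : 'I_T'.+1, W s == x]), pi; split.
  by apply/existsP; exists ord0; rewrite /W wcat_head // p0.
move=> x /existsP [s0 hs0].
have [s /eqP Ws pix] := @eq_bigmax _ _ _ low s0 (fun s => W s == x)
  (fun s => rho s) hs0 (fun s _ => bigmin_le _ s _).
have sT := ltn_ord s; exists (W (s' s).+1); split.
- by rewrite -Ws -Ws' //; apply: hW.
- by apply/existsP; exists (Ordinal (s'T s : (s' s).+1 < T'.+1)%N).
- rewrite {1}/pi pix; apply: le_trans (rho_s' _ sT) _.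
  rewrite rhoS // -Ws -[W s](Ws' s sT) lerD2l; apply: rho_pi; exact: s'T.
Qed.

End Weight.
End Walks.

Section Game.
Variables (R : realType) (I J : finType).
Variables (EB : I -> J -> bool) (a b : I -> J -> R).
Implicit Types (EA : I -> J -> bool) (tau : J -> I) (S : pred J) (pi : J -> R).

(* Min moves from the column [x] to a row [k] with [EA k x] and earns [- a k x];
   Max moves from the row [k] to a column [l] with [EB k l] and earns [b k l]. *)

Definition play_step tau : rel J := fun x y => EB (tau x) y.

Definition play_weight tau (x y : J) : R := - a (tau x) x + b (tau x) y.

Definition min_wins EA tau j : Prop := (forall x, EA (tau x) x) /\
  reachable_cycles_neg (play_weight tau) (play_step tau) j.

(* Certificate that Max secures a non-negative mean payoff from every node of [S]. *)
Definition max_potential EA (S : pred J) (pi : J -> R) : Prop :=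
  forall x, S x -> forall k, EA k x ->
    exists l, [/\ EB k l, S l & pi x <= - a k x + b k l + pi l].

Definition max_wins EA j : Prop := exists S pi, S j /\ max_potential EA S pi.

Lemma min_winsW EA EA' tau j : (forall k x, EA' k x -> EA k x) ->
  min_wins EA' tau j -> min_wins EA tau j.
Proof. by move=> sub [hs hneg]; split=> // x; apply: sub. Qed.

Lemma max_potentialW EA EA' S pi : (forall x, S x -> forall k, EA k x -> EA' k x) ->
  max_potential EA' S pi -> max_potential EA S pi.
Proof. by move=> sub h x Sx k hk; apply: h => //; apply: sub. Qed.

Lemma max_potentialD EA S pi c :
  max_potential EA S pi -> max_potential EA S (fun x => pi x + c).
Proof.
move=> h x Sx k hk; have [l [hl Sl hle]] := h x Sx k hk.
by exists l; split => //; rewrite addrA lerD2r.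
Qed.

Lemma positional_min_or_max_wins EA tau j : (forall x, EA (tau x) x) ->
  (forall x k, EA k x -> k = tau x) -> min_wins EA tau j \/ max_wins EA j.
Proof.
move=> hs huniq; have [hneg|] := pselect (reachable_cycles_neg (play_weight tau)
  (play_step tau) j); first by left.
move=> /existsNP [w /existsNP [L /not_implyP [L0 /not_implyP [wL
  /not_implyP [hw /not_implyP [hc /negP]]]]]]; rewrite -leNgt => hpos.
have [S [pi [Sj hpi]]] := lasso_potential L0 wL hw hc hpos.
right; exists S, pi; split => // x Sx k /huniq ->.
by have [l [hl Sl hle]] := hpi x Sx; exists l.
Qed.

Section Glue.
Variables (EA EA1 EA2 : I -> J -> bool) (x : J).
Hypothesis off_x : forall y k, y != x -> EA k y -> EA1 k y && EA2 k y.
Hypothesis at_x : forall k, EA k x -> EA1 k x || EA2 k x.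

Definition merge_potential S1 S2 pi1 pi2 y :=
  if S1 y then (if S2 y then Order.max (pi1 y) (pi2 y) else pi1 y) else pi2 y.

Lemma max_potential_merge S1 S2 pi1 pi2 :
  max_potential EA1 S1 pi1 -> max_potential EA2 S2 pi2 ->
  S1 x -> S2 x -> pi1 x = pi2 x ->
  max_potential EA [pred y | S1 y || S2 y] (merge_potential S1 S2 pi1 pi2).
Proof.
move=> H1 H2 S1x S2x pix; set pi := merge_potential _ _ _ _.
have pi1le y : S1 y -> pi1 y <= pi y.
  by rewrite /pi /merge_potential => ->; case: (S2 y); rewrite ?le_max ?lexx.
have pi2le y : S2 y -> pi2 y <= pi y.
  by rewrite /pi /merge_potential => ->; case: (S1 y); rewrite ?le_max ?lexx ?orbT.
have use1 y k : S1 y -> pi y = pi1 y -> EA1 k y -> exists l,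
    [/\ EB k l, S1 l || S2 l & pi y <= - a k y + b k l + pi l].
  move=> S1y -> hk; have [l [hl Sl hle]] := H1 y S1y k hk.
  by exists l; rewrite Sl; split => //; apply: le_trans hle _; rewrite lerD2l pi1le.
have use2 y k : S2 y -> pi y = pi2 y -> EA2 k y -> exists l,
    [/\ EB k l, S1 l || S2 l & pi y <= - a k y + b k l + pi l].
  move=> S2y -> hk; have [l [hl Sl hle]] := H2 y S2y k hk.
  by exists l; rewrite Sl orbT; split => //; apply: le_trans hle _; rewrite lerD2l pi2le.
move=> y /= Sy k; case: (eqVneq y x) => [->|ne] hk.
  have pix1 : pi x = pi1 x by rewrite /pi /merge_potential S1x S2x pix maxxx.
  have pix2 : pi x = pi2 x by rewrite pix1.
  by case/orP: (at_x hk) => [/(use1 _ _ S1x pix1)|/(use2 _ _ S2x pix2)].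
have piy : S1 y /\ pi y = pi1 y \/ S2 y /\ pi y = pi2 y.
  rewrite /pi /merge_potential.
  case: (boolP (S1 y)) Sy => S1y; case: (boolP (S2 y)) => S2y // _.
  - by case: (leP (pi1 y) (pi2 y)) => _; [right | left].
  - by left.
  - by right.
have [hk1 hk2] := andP (off_x ne hk).
by case: piy => -[Sy' e]; [apply: use1 | apply: use2].
Qed.

Lemma max_wins_glue j : max_wins EA1 j -> max_wins EA2 j -> max_wins EA j.
Proof.
move=> [S1 [pi1 [S1j H1]]] [S2 [pi2 [S2j H2]]].
have [S1x|S1x] := boolP (S1 x); last first.
  exists S1, pi1; split => //; apply: max_potentialW H1 => y S1y k hk.
  have yx : y != x by apply: contraNneq S1x => <-.
  by case/andP: (off_x yx hk).
have [S2x|S2x] := boolP (S2 x); last first.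
  exists S2, pi2; split => //; apply: max_potentialW H2 => y S2y k hk.
  have yx : y != x by apply: contraNneq S2x => <-.
  by case/andP: (off_x yx hk).
pose pi2' y := pi2 y + (pi1 x - pi2 x).
exists [pred y | S1 y || S2 y], (merge_potential S1 S2 pi1 pi2'); split.
  by rewrite /= S1j.
by apply: max_potential_merge H1 (max_potentialD _ H2) S1x S2x _; rewrite addrC subrK.
Qed.

End Glue.

Definition min_edges EA := [set p : I * J | EA p.1 p.2].

Lemma min_edges_ltn EA EA' k0 x0 : (forall k x, EA' k x -> EA k x) ->
  EA k0 x0 -> ~~ EA' k0 x0 -> (#|min_edges EA'| < #|min_edges EA|)%N.
Proof.
move=> sub h h'; apply: proper_card; apply/properP; split.
  by apply/fintype.subsetP => -[k x]; rewrite !inE; apply: sub.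
by exists (k0, x0); rewrite !inE.
Qed.

Theorem min_or_max_wins EA : (forall x, exists k, EA k x) ->
  forall j, (exists tau, min_wins EA tau j) \/ max_wins EA j.
Proof.
have [n] := ubnP #|min_edges EA|; elim: n EA => // n IH EA; rewrite ltnS => hcard hcol j.
have [[x [k1 [k2 [ne h1 h2]]]]|hno] :=
  pselect (exists x k1 k2, [/\ k1 != k2, EA k1 x & EA k2 x]); last first.
  pose tau x := xchoose (hcol x).
  have htau x : EA (tau x) x := xchooseP (hcol x).
  have huniq x k : EA k x -> k = tau x.
    move=> hk; apply/eqP/negPn/negP => hne; apply: hno; by exists x, k, (tau x).
  by case: (positional_min_or_max_wins j htau huniq) => ?; [left; exists tau | right].
(* Split the choices at [x]: either Min must play [k1] there, or is forbidden to. *)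
pose EA1 k y := EA k y && ((y != x) || (k == k1)).
pose EA2 k y := EA k y && ((y != x) || (k != k1)).
have sub1 k y : EA1 k y -> EA k y by case/andP.
have sub2 k y : EA2 k y -> EA k y by case/andP.
have lt1 : (#|min_edges EA1| < n)%N.
  apply: leq_trans hcard; apply: (min_edges_ltn sub1 h2).
  by rewrite /EA1 eqxx /= eq_sym (negbTE ne) andbF.
have lt2 : (#|min_edges EA2| < n)%N.
  by apply: leq_trans hcard; apply: (min_edges_ltn sub2 h1); rewrite /EA2 !eqxx andbF.
have col1 y : exists k, EA1 k y.
  case: (eqVneq y x) => [->|yx]; first by exists k1; rewrite /EA1 h1 !eqxx orbT.
  by have [k hk] := hcol y; exists k; rewrite /EA1 hk yx.
have col2 y : exists k, EA2 k y.
  case: (eqVneq y x) => [->|yx]; first by exists k2; rewrite /EA2 h2 eqxx eq_sym ne.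
  by have [k hk] := hcol y; exists k; rewrite /EA2 hk yx.
case: (IH EA1 lt1 col1 j) => [[tau /(min_winsW sub1) ?]|win1]; first by left; exists tau.
case: (IH EA2 lt2 col2 j) => [[tau /(min_winsW sub2) ?]|win2]; first by left; exists tau.
right; apply: (max_wins_glue (EA1 := EA1) (EA2 := EA2) (x := x)) win1 win2.
  by move=> y k yx hk; rewrite /EA1 /EA2 hk yx.
by move=> k hk; rewrite /EA1 /EA2 hk eqxx /=; case: (k == k1).
Qed.

End Game.

Lemma uniform_pos_bound (R : realType) (T : finType) (P : T -> R -> Prop) :
  (forall t, exists2 delta, 0 < delta & P t delta) ->
  (forall t delta delta', 0 < delta' -> delta' <= delta -> P t delta -> P t delta') ->
  exists2 delta, 0 < delta & forall t, P t delta.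
Proof.
move=> hex hmon.
suff [delta d0 hd] : exists2 delta, 0 < delta & forall t, t \in enum T -> P t delta.
  by exists delta => // t; apply: hd; rewrite mem_enum.
elim: (enum T) => [|t s [delta d0 IH]]; first by exists 1.
have [dt dt0 Pt] := hex t.
have m0 : 0 < Order.min delta dt by rewrite lt_min d0 dt0.
exists (Order.min delta dt) => // t'; rewrite in_cons => /orP [/eqP ->|ts].
  by apply: hmon Pt; rewrite // ge_min lexx orbT.
by apply: hmon (IH _ ts); rewrite // ge_min lexx.
Qed.

Lemma repeat_node (T : finType) (w : nat -> T) :
  exists s d, [/\ (0 < d)%N, (s + d <= #|T|)%N & w s = w (s + d)%N].
Proof.
have /injectivePn [x [y xy wxy]] : ~~ injectiveb (fun i : 'I_#|T|.+1 => w i).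
  by apply/negP => /injectiveP /leq_card; rewrite card_ord ltnn.
wlog lt_xy : x y xy wxy / (x < y)%N.
  move=> hw; case: (ltngtP x y) => h; [exact: hw xy wxy h | |].
    by apply: (hw y x); rewrite 1?eq_sym.
  by move: xy; rewrite -val_eqE /= h eqxx.
exists x, (y - x)%N; rewrite subn_gt0 subnKC ?(ltnW lt_xy) //.
by split => //; rewrite -ltnS.
Qed.

Section WalkBound.
Variables (R : realType) (T : finType) (e : rel T) (c : T -> T -> R).

Lemma wgt_le_mul w k B : (forall x y, c x y <= B) -> wgt c w k <= k%:R * B.
Proof.
move=> hB; rewrite /wgt mulr_natl -[k in B *+ k](subn0 k) -sumr_const_nat.
by apply: ler_sum.
Qed.

Lemma wgt_cut w s d t : w s = w (s + d)%N ->
  wgt c w (s + d + t) =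
  wgt c (wcat w s (fun i => w (s + d + i)%N)) (s + t) + wgt c (fun i => w (s + i)%N) d.
Proof.
move=> wsd; rewrite wgt_wcat ?addn0 // -addnA !wgt_split -!addrA; congr (_ + _).
by rewrite addrC; congr (_ + _); apply: eq_bigr => i _; rewrite !addnA.
Qed.

Lemma walk_cut w s d t : w s = w (s + d)%N -> walk e w (s + d + t) ->
  walk e (wcat w s (fun i => w (s + d + i)%N)) (s + t).
Proof.
move=> wsd hw; apply: walk_wcat; rewrite ?addn0 //.
  by apply: walkW hw; rewrite -addnA leq_addr.
exact: walk_drop hw.
Qed.

Lemma short_cycles_neg j : reachable_cycles_neg c e j ->
  exists2 eps, 0 < eps & forall w L, (0 < L)%N -> (L <= #|T|)%N ->
    w L = w 0%N -> walk e w L -> connect e j (w 0%N) -> wgt c w L <= - eps.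
Proof.
(* Walks of length at most #|T| are read off finite functions on 'I_#|T|.+1,
   so only finitely many weights are involved. *)
move=> hneg; pose wF (F : {ffun 'I_#|T|.+1 -> T}) i := F (inord i).
pose P (t : 'I_#|T|.+1 * {ffun 'I_#|T|.+1 -> T}) eps :=
  (0 < t.1)%N -> wF t.2 t.1 = wF t.2 0%N -> walk e (wF t.2) t.1 ->
  connect e j (wF t.2 0%N) -> wgt c (wF t.2) t.1 <= - eps.
have [eps eps0 hP] : exists2 eps, 0 < eps & forall t, P t eps.
  apply: uniform_pos_bound => [[L F]|t eps eps' _ le_eps h]; last first.
    rewrite /P => *; apply: le_trans (h _ _ _ _) _; by rewrite // lerN2.
  have [hcyc|] := pselect (0 < L /\ wF F L = wF F 0%N /\
    walk e (wF F) L /\ connect e j (wF F 0%N))%N; last first.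
    by move=> hno; exists 1 => // L0 wL hw hc; case: hno.
  case: hcyc => L0 [wL [hw hc]]; exists (- wgt c (wF F) L).
    by rewrite oppr_gt0; apply: hneg.
  by rewrite /P opprK.
exists eps => // w L L0 LT wL hw hc.
pose F := [ffun i : 'I_#|T|.+1 => w i].
have wFE i : (i <= L)%N -> w i = wF F i.
  by move=> iL; rewrite /wF ffunE inordK // ltnS (leq_trans iL).
have := hP (Ordinal (LT : (L < #|T|.+1)%N), F); rewrite /P /= -(eq_wgt _ wFE).
apply; rewrite -?wFE //; exact: eq_walk hw.
Qed.

Lemma walk_bound j : reachable_cycles_neg c e j ->
  exists C delta, 0 < delta /\
    forall w k, w 0%N = j -> walk e w k -> wgt c w k <= C - delta * k%:R.
Proof.
move=> /short_cycles_neg [eps eps0 hshort].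
pose N := #|T|; have N0 : (0 < N)%N by apply/card_gt0P; exists j.
pose B := \big[Order.max/0]_(xy : T * T) c xy.1 xy.2.
have hB x y : c x y <= B by exact: (le_bigmax _ (fun xy : T * T => c xy.1 xy.2) (x, y)).
have B0 : 0 <= B := bigmax_ge_id _ _ _ _.
pose delta := eps / N%:R.
have delta0 : 0 < delta by rewrite divr_gt0 // ltr0n.
have epsE : eps = delta * N%:R by rewrite /delta mulfVK // pnatr_eq0 -lt0n.
exists (N%:R * (B + delta)), delta; split => // w k.
elim/ltn_ind: k w => k IH w w0 hw; case: (leqP k N) => kN.
  apply: le_trans (wgt_le_mul w k hB) _.
  have kN' : k%:R <= N%:R :> R by rewrite ler_nat.
  nra.
(* Cut out a cycle of length at most [N] and use induction on the rest. *)
have [s [d [d0 sdN wsd]]] := repeat_node w.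
have sdk : (s + d <= k)%N by apply: leq_trans sdN (ltnW kN).
have [t def_k] : exists t, k = (s + d + t)%N by exists (k - (s + d))%N; rewrite subnKC.
subst k; rewrite (wgt_cut _ wsd).
have hcyc : wgt c (fun i => w (s + i)%N) d <= - (delta * d%:R).
  apply: le_trans (hshort _ _ d0 (leq_trans (leq_addl s d) sdN) _ _ _) _.
  - by rewrite addn0.
  - by apply: walk_drop; apply: walkW hw; rewrite leq_addr.
  - by rewrite addn0 -w0; apply: walk_connect; apply: walkW hw; rewrite -addnA leq_addr.
  by rewrite lerN2 epsE ler_pM2l // ler_nat (leq_trans (leq_addl s d) sdN).
have lt_st : (s + t < s + d + t)%N by rewrite -addnA ltn_add2l -{1}(add0n t) ltn_add2r.
have w'0 : wcat w s (fun i => w (s + d + i)%N) 0 = j by rewrite wcat_head.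
have hrest := IH _ lt_st _ w'0 (walk_cut wsd hw).
apply: le_trans (lerD hrest hcyc) _; rewrite !natrD !mulrDr; lra.
Qed.

End WalkBound.

Section GrowthRate.
Variable R : realType.
Local Open Scope classical_set_scope.
Implicit Types (u : nat -> R) (t : R).

Definition lower_rate u t := exists C, forall k, k%:R * t - C <= u k.
Definition upper_rate u t := exists C, forall k, u k <= C + k%:R * t.

Lemma bounded_natmul_le0 (x C : R) : (forall k, k%:R * x <= C) -> x <= 0.
Proof.
move=> h; rewrite leNgt; apply/negP => x0.
have := h (Num.trunc (C / x)).+1; rewrite leNgt => /negP; apply.
by rewrite -ltr_pdivrMr // truncnS_gt.
Qed.

Lemma lower_le_upper u t t' : lower_rate u t -> upper_rate u t' -> t <= t'.
Proof.
move=> [C hC] [C' hC']; rewrite -subr_le0.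
apply: (bounded_natmul_le0 (C := C + C')) => k.
by move: (hC k) (hC' k); rewrite mulrBr; lra.
Qed.

Lemma rate_squeeze u v :
  (forall eps, 0 < eps -> exists t1 t2,
     [/\ v - eps <= t1, t2 <= v + eps, lower_rate u t1 & upper_rate u t2]) ->
  (fun k => u k / k%:R) @ \oo --> v.
Proof.
move=> h; apply/cvgrPdist_le => eps eps0.
have e2 : 0 < eps / 2 by rewrite divr_gt0.
have [t1 [t2 [ht1 ht2 [C1 hC1] [C2 hC2]]]] := h _ e2.
near=> k.
have hk : (`|C1| + `|C2|) / (eps / 2) <= k%:R.
  by near: k; exact: nbhs_infty_ger.
have k0 : 0 < k%:R :> R.
  by near: k; exists 1%N => // k; rewrite /= ltr0n.
have hC : `|C1| + `|C2| <= k%:R * (eps / 2).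
  by rewrite -ler_pdivrMr.
rewrite -[v](mulfK (lt0r_neq0 k0)) -mulrBl normrM normfV normr_nat.
rewrite ler_pdivrMr // ler_norml; apply/andP; split.
all: move: (hC1 k) (hC2 k) hC; have := ler_norm C1; have := ler_norm C2.
all: have := ler_norm (- C1); have := ler_norm (- C2); rewrite !normrN.
all: move: ht1 ht2; set K := k%:R => *; nra.
Unshelve. all: by end_near.
Qed.

Lemma rate_limit u : (exists t, lower_rate u t) -> (exists t, upper_rate u t) ->
  (forall t, lower_rate u t \/ exists2 t', t' < t & upper_rate u t') ->
  exists v, [/\ (fun k => u k / k%:R) @ \oo --> v,
    forall t, lower_rate u t -> t <= v & forall t, upper_rate u t -> v <= t].
Proof.
move=> [t0 low0] [t1 up1] hdich.
pose L := [set t | lower_rate u t].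
have hL : has_sup L.
  split; first by exists t0.
  by exists t1 => t lt; apply: lower_le_upper lt up1.
have lower_le t : lower_rate u t -> t <= sup L by move=> lt; apply: sup_upper_bound.
have le_upper t : upper_rate u t -> sup L <= t.
  by move=> ut; apply: ge_sup => [|s ls]; [case: hL | apply: lower_le_upper ls ut].
exists (sup L); split => //; apply: rate_squeeze => eps eps0.
have [s ls lt_s] := sup_adherent eps0 hL.
have [ls'|[t' lt_t' ut']] := hdich (sup L + eps).
  by have := lower_le _ ls'; rewrite gerDl leNgt eps0.
by exists s, t'; split => //; apply: ltW.
Qed.

End GrowthRate.

Section ShapleyOperator.
Variables (R : realType) (I J : finType).
Local Open Scope classical_set_scope.
Variables (EA EB : I -> J -> bool) (a b : I -> J -> R).
(* [f] is the Shapley operator y |-> min_(EA k x) (- a k x + max_(EB k l) (b k l + y l)),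
   described by the two inequalities it satisfies. *)
Variable f : (J -> R) -> J -> R.
Hypothesis f_ge : forall y x r,
  (forall k, EA k x -> exists l, EB k l /\ r <= - a k x + b k l + y l) -> r <= f y x.
Hypothesis f_le : forall y x k, EA k x ->
  exists l, EB k l /\ f y x <= - a k x + b k l + y l.
Hypothesis EA_col : forall x, exists k, EA k x.
Hypothesis EB_row : forall k, exists l, EB k l.

Definition orbit k := iter k f (fun _ => 0).

Lemma orbitS k : orbit k.+1 = f (orbit k).
Proof. by []. Qed.

Lemma max_wins_lower_rate t j : max_wins EB a (fun k l => b k l - t) EA j ->
  lower_rate (orbit^~ j) t.
Proof.
move=> [S [pi [Sj hpi]]].
pose M := \big[Order.max/0]_x `|pi x|.
have piM x : pi x <= M.
  by apply: le_trans (ler_norm _) _; apply: (le_bigmax _ (fun x => `|pi x|)).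
suff orbit_ge k x : S x -> pi x - M + k%:R * t <= orbit k x.
  by exists (M - pi j) => k; have := orbit_ge k j Sj; lra.
elim: k x => [|k IH] x Sx; first by rewrite mul0r addr0 subr_le0.
rewrite orbitS; apply: f_ge => k' hk; have [l [hl Sl hle]] := hpi x Sx k' hk.
exists l; split => //; move: (IH l Sl) hle; rewrite -addn1 natrD mulrDl mul1r.
lra.
Qed.

Lemma orbit_le_walk tau : (forall x, EA (tau x) x) -> forall k x,
  exists w, [/\ w 0%N = x, walk (play_step EB tau) w k &
    orbit k x <= wgt (play_weight a b tau) w k].
Proof.
move=> hs; elim=> [|k IH] x; first by exists (fun _ => x); rewrite /wgt big_geq.
have [l [hl hle]] := f_le (orbit k) (hs x).
have [w [w0 hw hk]] := IH l.
exists (fun i => if i is i'.+1 then w i' else x); split => //.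
  by case=> [|i] /= ik; [rewrite w0 | apply: hw].
rewrite orbitS; apply: le_trans hle _.
by rewrite /wgt big_nat_recl //= w0 /play_weight lerD2l.
Qed.

Lemma min_wins_upper_rate t tau j : min_wins EB a (fun k l => b k l - t) EA tau j ->
  exists2 delta, 0 < delta & upper_rate (orbit^~ j) (t - delta).
Proof.
move=> [hs /walk_bound [C [delta [d0 hC]]]].
exists delta => //; exists C => k.
have [w [w0 hw hk]] := orbit_le_walk hs k j.
apply: le_trans hk _; move: (hC w k w0 hw).
have -> : wgt (play_weight a (fun k l => b k l - t) tau) w k =
    wgt (play_weight a b tau) w k - k%:R * t.
  rewrite /wgt -[k in k%:R](subn0 k) mulr_natl -sumr_const_nat -sumrB.
  by apply: eq_bigr => i _; rewrite /play_weight addrA.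
rewrite mulrBr; lra.
Qed.

Lemma orbit_linear_bound : exists W, forall k x, `|orbit k x| <= k%:R * W.
Proof.
pose W := \big[Order.max/0]_(kxl : I * J * J) `|- a kxl.1.1 kxl.1.2 + b kxl.1.1 kxl.2|.
have hW k x l : `|- a k x + b k l| <= W.
  exact: (le_bigmax _ (fun kxl : I * J * J => `|- a kxl.1.1 kxl.1.2 + b kxl.1.1 kxl.2|)
    (k, x, l)).
exists W; elim=> [|k IH] x; first by rewrite normr0 mul0r.
rewrite orbitS -addn1 natrD mulrDl mul1r ler_norml; apply/andP; split.
  apply: f_ge => k' _; have [l hl] := EB_row k'; exists l; split => //.
  by move: (hW k' x l) (IH l); rewrite !ler_norml => /andP [h1 _] /andP [h2 _]; lra.
have [k' hk'] := EA_col x; have [l [hl hle]] := f_le (orbit k) hk'.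
apply: le_trans hle _.
by move: (hW k' x l) (IH l); rewrite !ler_norml => /andP [_ h1] /andP [_ h2]; lra.
Qed.

Lemma orbit_rate_neg j :
  limn (fun k => orbit k j / k%:R) < 0 <-> exists tau, min_wins EB a b EA tau j.
Proof.
have shift0 : (fun k l => b k l - 0) = b.
  by apply/funext => k; apply/funext => l; rewrite subr0.
have [v [cvg_v lower_v upper_v]] : exists v, [/\ (fun k => orbit k j / k%:R) @ \oo --> v,
    forall t, lower_rate (orbit^~ j) t -> t <= v &
    forall t, upper_rate (orbit^~ j) t -> v <= t].
  have [W hW] := orbit_linear_bound.
  apply: rate_limit => [|| t].
  - by exists (- W), 0 => k; move: (hW k j); rewrite ler_norml mulrN subr0 => /andP [].
  - by exists W, 0 => k; move: (hW k j); rewrite ler_norml add0r => /andP [].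
  case: (min_or_max_wins EB a (fun k l => b k l - t) EA_col j) => [[tau]|].
    move/min_wins_upper_rate => [delta d0 ut]; right; exists (t - delta) => //.
    by rewrite gtrDl oppr_lt0.
  by move/max_wins_lower_rate; left.
rewrite (cvg_lim _ cvg_v) //; split => [v0|[tau]].
  case: (min_or_max_wins EB a b EA_col j) => // hmax.
  have := @max_wins_lower_rate 0 j; rewrite shift0 => /(_ hmax) /lower_v.
  by rewrite leNgt v0.
rewrite -shift0 => /min_wins_upper_rate [delta d0 /upper_v].
by move/le_lt_trans; apply; rewrite sub0r oppr_lt0.
Qed.

End ShapleyOperator.

Section MatrixGame.
Variables (R : realType) (M N : nat).
Implicit Types (A : 'M[\bar R]_(M, N)) (k : 'I_M) (x : 'I_N).

Definition edge A k x := A k x != -oo%E.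
Definition weight A k x : R := fine (A k x).
Definition rowmax A (y : 'I_N -> R) k :=
  (\big[Order.max/-oo]_(l | edge A k l) (A k l + (y l)%:E))%E.

Lemma weightE A k x : A k x != +oo%E -> edge A k x -> A k x = (weight A k x)%:E.
Proof. by move=> hp hm; rewrite /weight fineK // fin_numE hp andbT. Qed.

End MatrixGame.

Section SharpOperator.
Variables (R : realType) (M N : nat) (A' B' : 'M[\bar R]_(M, N)).
Hypothesis A'_ninf : forall k x, A' k x != +oo%E.
Hypothesis B'_ninf : forall k l, B' k l != +oo%E.
Hypothesis A'_col : forall x, exists k, edge A' k x.
Hypothesis B'_row : forall k, exists l, edge B' k l.
Variable y : 'I_N -> R.
Local Open Scope ereal_scope.

Lemma rowmax_ge k l : edge B' k l -> (weight B' k l + y l)%:E <= rowmax B' y k.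
Proof. by move=> hl; rewrite EFinD -weightE //; apply: le_bigmax_cond. Qed.

Lemma rowmax_attained k :
  exists2 l, edge B' k l & rowmax B' y k = (weight B' k l + y l)%:E.
Proof.
have [l0 hl0] := B'_row k; rewrite /rowmax.
have [l hl ->] := eq_bigmax l0 _ (fun l => B' k l + (y l)%:E) hl0 (fun l _ => leNye _).
by exists l => //; rewrite EFinD -weightE.
Qed.

Lemma sharpE x :
  (sharp A' B' y x)%:E =
  \big[Order.min/+oo]_(k | A' k x != -oo) (- A' k x + rowmax B' y k).
Proof.
have [k0 hk0] := A'_col x.
have [k hk eqk] := eq_bigmin k0 (fun k => A' k x != -oo)
  (fun k => - A' k x + rowmax B' y k) hk0 (fun k _ => leey _).
have [l hl eql] := rowmax_attained k.
by rewrite /sharp fineK // eqk eql (weightE _ hk).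
Qed.

Lemma sharp_ge x r : (forall k, edge A' k x ->
    exists l, edge B' k l /\ (r <= - weight A' k x + weight B' k l + y l)%R) ->
  (r <= sharp A' B' y x)%R.
Proof.
move=> h; rewrite -lee_fin sharpE; apply/bigmin_geP; split => [|k hk]; first exact: leey.
have [l [hl hr]] := h k hk; rewrite (weightE _ hk) //.
apply: le_trans (_ : (- weight A' k x + (weight B' k l + y l))%:E <= _).
  by rewrite lee_fin addrA.
by rewrite EFinD EFinN leeD2l // rowmax_ge.
Qed.

Lemma sharp_le x k : edge A' k x ->
  exists l, edge B' k l /\ (sharp A' B' y x <= - weight A' k x + weight B' k l + y l)%R.
Proof.
move=> hk; have [l hl eql] := rowmax_attained k; exists l; split => //.
rewrite -lee_fin sharpE; apply: (bigmin_inf k) => //.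
by rewrite eql (weightE _ hk) // -EFinN -EFinD addrA lexx.
Qed.

End SharpOperator.

Section ProblemMatrices.
Variables (R : realType) (m n : nat).
Variables (U V : 'M[\bar R]_(m, n)) (b d : 'cV[\bar R]_m) (p : 'cV[\bar R]_n)
  (q : 'rV[\bar R]_n).

Lemma Amat_ninf : (forall i j, U i j != +oo%E) -> (forall i j, b i j != +oo%E) ->
  (forall i j, p i j != +oo%E) -> (forall i j, q i j != -oo%E) ->
  forall i j, Amat U b p q i j != +oo%E.
Proof.
move=> HU Hb Hp Hq i j.
rewrite /Amat; case: (split_ordP i) => i' ->; [rewrite col_mxEu | rewrite col_mxEd].
  case: (split_ordP i') => i1 ->; [rewrite col_mxEu | rewrite col_mxEd];
  by case: (split_ordP j) => j1 ->; rewrite ?row_mxEl ?row_mxEr ?mxE.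
case: (split_ordP j) => j1 ->; rewrite ?row_mxEl ?row_mxEr mxE //.
by rewrite eqe_oppLR.
Qed.

Lemma Bmat_ninf lam : (forall i j, V i j != +oo%E) -> (forall i j, d i j != +oo%E) ->
  forall i l, Bmat V d lam i l != +oo%E.
Proof.
move=> HV Hd i l.
rewrite /Bmat; case: (split_ordP i) => i' ->; [rewrite col_mxEu | rewrite col_mxEd].
  case: (split_ordP i') => i1 ->; [rewrite col_mxEu | rewrite col_mxEd];
  case: (split_ordP l) => j1 ->; rewrite ?row_mxEl ?row_mxEr ?mxE //; by case: ifP.
by case: (split_ordP l) => j1 ->; rewrite ?row_mxEl ?row_mxEr mxE.
Qed.

Lemma Bmat_cases (i : 'I_(m + n + 1)) (l : 'I_(n + 1)) :
  [\/ (i < m)%N /\ (forall lam lam', Bmat V d lam i l = Bmat V d lam' i l),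
      (m <= i)%N /\ (forall lam, Bmat V d lam i l = -oo%E) |
      (m <= i)%N /\ (forall lam, Bmat V d lam i l = lam%:E)].
Proof.
rewrite /Bmat; case: (split_ordP i) => i' ->.
  case: (split_ordP i') => i1 ->.
    by constructor 1; split => [|lam lam']; rewrite ?col_mxEu //= ltn_ord.
  have hm : (m <= lshift 1 (rshift m i1))%N by rewrite /= leq_addr.
  case: (split_ordP l) => l1 ->.
    case: (eqVneq i1 l1) => h.
      by constructor 3; split => // lam; rewrite col_mxEu col_mxEd row_mxEl mxE h eqxx.
    by constructor 2; split => // lam; rewrite col_mxEu col_mxEd row_mxEl mxE (negbTE h).
  by constructor 2; split => // lam; rewrite col_mxEu col_mxEd row_mxEr mxE.
have hm : (m <= rshift (m + n) i')%N by rewrite /= -addnA leq_addr.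
case: (split_ordP l) => l1 ->.
  by constructor 2; split => // lam; rewrite col_mxEd row_mxEl mxE.
by constructor 3; split => // lam; rewrite col_mxEd row_mxEr mxE.
Qed.

End ProblemMatrices.

Section Proposition7.
Variables (R : realType) (m n : nat).
Variables (U V : 'M[\bar R]_(m, n)) (b d : 'cV[\bar R]_m) (p : 'cV[\bar R]_n)
  (q : 'rV[\bar R]_n).
Hypotheses (HU : forall i j, U i j != +oo%E) (HV : forall i j, V i j != +oo%E)
  (Hb : forall i j, b i j != +oo%E) (Hd : forall i j, d i j != +oo%E)
  (Hp : forall i j, p i j != +oo%E) (Hq : forall i j, q i j != -oo%E).
Hypothesis HA : forall j, exists i, Amat U b p q i j != -oo%E.
Hypothesis HB : forall (lam : R) i, exists j, Bmat V d lam i j != -oo%E.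
Variable lamstar : R.

Local Notation A := (Amat U b p q).
Local Notation B lam := (Bmat V d lam).
Local Notation EA := (edge A).
Local Notation EB := (edge (B lamstar)).
Local Notation a := (weight A).
Local Notation bw lam := (weight (B lam)).

Lemma edge_Bmat lam : edge (B lam) = EB.
Proof.
apply/funext => i; apply/funext => l; rewrite /edge.
by case: (Bmat_cases V d i l) => -[_ h]; rewrite ?(h lam lamstar) ?h.
Qed.

Lemma weight_Bmat lam i l : EB i l ->
  bw lam i l = bw lamstar i l + (m <= i)%N%:R * (lam - lamstar).
Proof.
rewrite /edge /weight; case: (Bmat_cases V d i l) => -[hi h].
- by rewrite leqNgt hi mul0r addr0 (h lam lamstar).
- by rewrite h eqxx.
- by rewrite hi !h /= mul1r addrC subrK.
Qed.

Lemma chi_lt0 lam j :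
  chi A (B lam) j < 0 <-> exists tau, min_wins EB a (bw lam) EA tau j.
Proof.
have hA := Amat_ninf HU Hb Hp Hq; have hB := Bmat_ninf lam HV Hd.
rewrite -(edge_Bmat lam).
exact: (orbit_rate_neg (sharp_ge hA hB HA (HB lam)) (sharp_le hA hB HA (HB lam))
  HA (HB lam)).
Qed.

Lemma Phi_lt0 lam : (Phi U V b d p q lam < 0)%E <-> exists j, chi A (B lam) j < 0.
Proof.
split => [hlt|[j hj]]; last first.
  by apply: le_lt_trans (bigmin_le _ j _) _; rewrite lte_fin.
apply: contrapT => hno; move: hlt; apply/negP; rewrite -leNgt.
apply/bigmin_geP; split => // i _; rewrite lee_fin leNgt; apply/negP => hi.
by apply: hno; exists i.
Qed.

Section Strategy.
Variable tau : 'I_(n + 1) -> 'I_(m + n + 1).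
Hypothesis tau_strategy : is_strategy A tau.

Local Notation step := (play_step EB tau).
Local Notation cw lam := (play_weight a (bw lam) tau).

Definition outside_visits w L := (\sum_(0 <= i < L) (m <= tau (w i))%N)%N.

Lemma minstep_restr : minstep (restr A tau) (B lamstar) =2 step.
Proof.
move=> x y; rewrite /minstep /play_step; apply/existsP/idP => [[i /andP [hA hB]]|h].
  case: (eqVneq i (tau x)) => [<-|ne]; first exact: hB.
  by move: hA; rewrite mxE (negbTE ne) eqxx.
by exists (tau x); rewrite mxE eqxx; apply/andP; split => //; apply: tau_strategy.
Qed.

Lemma wgt_Bmat lam w L : walk step w L ->
  wgt (cw lam) w L = wgt (cw lamstar) w L + (outside_visits w L)%:R * (lam - lamstar).
Proof.
move=> hw; rewrite /wgt /outside_visits natr_sum mulr_suml -big_split /=.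
apply: eq_big_nat => i /andP [_ iL].
by rewrite /play_weight weight_Bmat ?addrA //; apply: hw.
Qed.

Definition good_walks j := forall w L, (0 < L)%N -> w L = w 0%N -> walk step w L ->
  connect step j (w 0%N) ->
  wgt (cw lamstar) w L <= 0 /\ (wgt (cw lamstar) w L = 0 -> (0 < outside_visits w L)%N).

Lemma restr_cycle_strategy K (cl : 'I_K.+1 -> 'I_(n + 1)) ci :
  is_cycle (restr A tau) (B lamstar) cl ci -> forall k, ci k = tau (cl k).
Proof.
move=> hc k; have [hA _] := hc k; apply: contraTeq hA => ne.
by rewrite mxE (negbTE ne) eqxx.
Qed.

Section ClosedWalk.
Variables (K : nat) (w : nat -> 'I_(n + 1)).
Hypothesis w_closed : w K.+1 = w 0%N.

Local Notation cl := (fun k : 'I_K.+1 => w k).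
Local Notation ci := (fun k : 'I_K.+1 => tau (w k)).

Lemma w_ordS (k : 'I_K.+1) : w (ordS k) = w k.+1.
Proof.
rewrite /=; case: (ltnP k.+1 K.+1) => h; first by rewrite modn_small.
have -> : k.+1 = K.+1 by apply/eqP; rewrite eqn_leq h ltn_ord.
by rewrite modnn w_closed.
Qed.

Lemma is_cycle_walk : is_cycle (restr A tau) (B lamstar) cl ci <-> walk step w K.+1.
Proof.
split => [hc i iK|hw k]; first by have [_] := hc (Ordinal iK); rewrite w_ordS.
by rewrite mxE eqxx w_ordS; split; [apply: tau_strategy | apply: hw].
Qed.

Lemma cycle_weight_walk : walk step w K.+1 ->
  cycle_weight (restr A tau) (B lamstar) cl ci = (wgt (cw lamstar) w K.+1)%:E.
Proof.
move=> hw; rewrite /cycle_weight /wgt big_mkord -sumEFin; apply: eq_bigr => k _.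
rewrite mxE eqxx w_ordS (weightE (Amat_ninf HU Hb Hp Hq _ _) (tau_strategy _)).
by rewrite (weightE (Bmat_ninf _ HV Hd _ _) (hw _ (ltn_ord k))).
Qed.

Lemma cycle_accessible_walk j : walk step w K.+1 ->
  cycle_accessible (restr A tau) (B lamstar) j cl <-> connect step j (w 0%N).
Proof.
move=> hw; split => [[k]|hc]; last by exists ord0; rewrite (eq_connect minstep_restr).
rewrite (eq_connect minstep_restr) => hk.
by apply: connect_trans hk (closed_walk_connect hw w_closed (ltnW (ltn_ord k))).
Qed.

Lemma outside_visits_gt0 :
  (exists k, (m <= val (ci k))%N) <-> (0 < outside_visits w K.+1)%N.
Proof.
rewrite /outside_visits lt0n sum_nat_seq_neq0; split => [[k hk]|/hasP [i]].
  by apply/hasP; exists (val k); rewrite ?mem_index_iota //= hk.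
by rewrite mem_index_iota eqb0 negbK => /andP [_ iK] hi; exists (Ordinal iK).
Qed.

End ClosedWalk.

Lemma good_nodeP j : good_node (restr A tau) (B lamstar) m j <-> good_walks j.
Proof.
split => [hg w [//|K] _ wL hw hc|hg K cl ci hcyc hacc].
  have [] := hg K _ _ ((is_cycle_walk wL).2 hw) ((cycle_accessible_walk wL j hw).2 hc).
  rewrite cycle_weight_walk // lee_fin => h1 h2; split => // h0.
  by apply/outside_visits_gt0/h2; rewrite h0.
pose w i := cl (inord (i %% K.+1)).
have wL : w K.+1 = w 0%N by rewrite /w modnn mod0n.
have clE : cl = fun k => w k.
  by apply/funext => k; rewrite /w modn_small // inord_val.
have ciE : ci = fun k => tau (w k).
  by apply/funext => k; rewrite (restr_cycle_strategy hcyc) clE.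
rewrite clE ciE in hcyc hacc *; have hw := (is_cycle_walk wL).1 hcyc.
have [h1 h2] := hg w K.+1 erefl wL hw ((cycle_accessible_walk wL j hw).1 hacc).
rewrite cycle_weight_walk // lee_fin; split => // /eqP; rewrite eqe => /eqP /h2.
by move/outside_visits_gt0.
Qed.

End Strategy.

Lemma good_walks_neg_below tau j lam : good_walks tau j -> lam < lamstar ->
  reachable_cycles_neg (play_weight a (bw lam) tau) (play_step EB tau) j.
Proof.
move=> hg hlam w L L0 wL hw hc; rewrite wgt_Bmat //.
have [+ h2] := hg w L L0 wL hw hc; rewrite le_eqVlt => /orP [/eqP W0|Wlt].
  by rewrite W0 add0r pmulr_rlt0 ?ltr0n ?h2 // subr_lt0.
have : (outside_visits tau w L)%:R * (lam - lamstar) <= 0.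
  by rewrite mulr_ge0_le0 // subr_le0 ltW.
lra.
Qed.

Lemma bad_cycle_persists tau j : ~ good_walks tau j ->
  exists2 delta, 0 < delta & forall lam, lamstar - delta < lam ->
    ~ reachable_cycles_neg (play_weight a (bw lam) tau) (play_step EB tau) j.
Proof.
move=> /existsNP [w /existsNP [L /not_implyP [L0 /not_implyP [wL
  /not_implyP [hw /not_implyP [hc hbad]]]]]].
set W := wgt _ w L in hbad; set c := outside_visits tau w L.
have cL : c%:R <= L%:R :> R.
  rewrite ler_nat /c /outside_visits; apply: (@leq_trans (\sum_(0 <= i < L) 1)).
    by apply: leq_sum => i _; apply: leq_b1.
  by rewrite sum_nat_const_nat subn0 muln1.
have [Wpos|Wle] := ltrP 0 W.
  exists (W / L%:R) => [|lam hlam hneg]; first by rewrite divr_gt0 // ltr0n.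
  have := hneg w L L0 wL hw hc; rewrite wgt_Bmat // -/W -/c; apply/negP; rewrite -leNgt.
  have hL : L%:R * (lamstar - lam) < W.
    by rewrite mulrC -ltr_pdivlMr ?ltr0n // ltrBlDr -ltrBlDl.
  case: (lerP lamstar lam) => hl.
    have : 0 <= c%:R * (lam - lamstar) by rewrite mulr_ge0 // subr_ge0.
    lra.
  have : c%:R * (lamstar - lam) <= L%:R * (lamstar - lam).
    by rewrite ler_wpM2r // subr_ge0 ltW.
  lra.
have W0 : W = 0 by apply: contrapT => Wne; apply: hbad; split => // W0; case: Wne.
have c0 : c = 0%N.
  by apply/eqP; rewrite -leqn0 leqNgt; apply/negP => cpos; apply: hbad.
exists 1 => // lam _ hneg; have := hneg w L L0 wL hw hc.
by rewrite wgt_Bmat // -/W -/c W0 c0 mul0r addr0 ltxx.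
Qed.

Lemma good_strategy_optimal : (0 <= Phi U V b d p q lamstar)%E ->
  (exists tau, is_strategy A tau /\ exists j, good_node (restr A tau) (B lamstar) m j) ->
  optimal U V b d p q lamstar.
Proof.
move=> h0 [tau [hs [j /(good_nodeP hs) hg]]]; split => // lam hlam.
apply/Phi_lt0; exists j; apply/chi_lt0; exists tau; split => //.
exact: good_walks_neg_below.
Qed.

Lemma optimal_good_strategy : optimal U V b d p q lamstar ->
  exists tau, is_strategy A tau /\ exists j, good_node (restr A tau) (B lamstar) m j.
Proof.
move=> [_ hopt]; apply: contrapT => hno.
(* Strategies are taken as finite functions, so that the pairs (tau, j) range
   over a finite type. *)
pose P (t : {ffun 'I_(n + 1) -> 'I_(m + n + 1)} * 'I_(n + 1)) delta :=
  forall lam, lamstar - delta < lam -> ~ min_wins EB a (bw lam) EA t.1 t.2.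
have [delta d0 hdelta] : exists2 delta, 0 < delta & forall t, P t delta.
  apply: uniform_pos_bound => [[tau j]|t dl dl' _ le_dl h lam hlam]; last first.
    by apply: h; apply: le_lt_trans hlam; rewrite lerB.
  have [hs|hs] := pselect (is_strategy A tau); last by exists 1 => // lam _ [].
  have [|dl dl0 hdl] := @bad_cycle_persists tau j.
    by move=> /(good_nodeP hs) hg; apply: hno; exists tau; split => //; exists j.
  by exists dl => // lam hlam [_]; apply: hdl.
pose lam := lamstar - delta / 2.
have [j /chi_lt0 [tau hwin]] : exists j, chi A (B lam) j < 0.
  by apply/Phi_lt0/hopt; rewrite /lam gtrBl divr_gt0.
apply: (hdelta ([ffun x => tau x], j) lam).
  by rewrite /lam ltrD2l ltrN2 ltr_pdivrMr // ltr_pMr // ltr1n.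
by rewrite /= (_ : fun_of_fin _ = tau) //; apply/funext => x; rewrite ffunE.
Qed.

End Proposition7.

Local Open Scope ereal_scope.

Theorem proposition7 (R : realType) (m n : nat)
  (U V : 'M[\bar R]_(m, n)) (b d : 'cV[\bar R]_m) (p : 'cV[\bar R]_n) (q : 'rV[\bar R]_n)
  (HU : forall i j, U i j != +oo) (HV : forall i j, V i j != +oo)
  (Hb : forall i j, b i j != +oo) (Hd : forall i j, d i j != +oo)
  (Hp : forall i j, p i j != +oo) (Hq : forall i j, q i j != -oo)
  (HA : forall j, exists i, Amat U b p q i j != -oo)
  (HB : forall (lam : R) i, exists j, Bmat V d lam i j != -oo)
  (lamstar : R) :
  optimal U V b d p q lamstar <->
  (0 <= Phi U V b d p q lamstar /\
   exists tau : 'I_(n + 1) -> 'I_(m + n + 1),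
     is_strategy (Amat U b p q) tau /\
     exists j : 'I_(n + 1),
       good_node (restr (Amat U b p q) tau) (Bmat V d lamstar) m j).
Proof.
split=> [hopt|[h0 hgood]].
  by split; [case: hopt | exact: optimal_good_strategy hopt].
exact: good_strategy_optimal h0 hgood.
Qed.
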